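(* Let $q$ be a prime power, $t\ge1$, $F=\mathbb{F}_{q^t}$, $B=\mathbb{F}_q$, and let $A=F$, so $n=|F|=q^t$. Suppose $r=n-k=q^s$ for some $s\in\{1,\dots,t\}$. Then any linear repair scheme over $B$ for a single erased symbol of the Reed-Solomon code $\mathrm{RS}(A,k)$ over $F$ requires a bandwidth of at least $(n-1)(t-s)$ sub-symbols over $B$.
   Context: $\mathrm{RS}(A,k)=\{(f(\alpha))_{\alpha\in A} : f\in F[x],\ \deg f<k\}$, with the symbol $f(\alpha)$ stored at node $\alpha$. A linear repair scheme over $B$ for the erased symbol $f(\alpha^* )$ is one in which each node $\alpha\neq\alpha^*$ sends $b_\alpha$ $B$-linear functions (sub-symbols over $B$) of its stored symbol, from which $f(\alpha^* )$ is recovered $B$-linearly; its bandwidth is $\sum_{\alpha\ne\alpha^*} b_\alpha$ sub-symbols. Equivalently, it corresponds to $t$ polynomials $g_1,\dots,g_t\in F[x]$ of degree at most $r-1$ with $\mathrm{rank}_B\{g_i(\alpha^* )\}_{i}=t$, the bandwidth being $\sum_{\alpha\neq\alpha^*}\mathrm{rank}_B\{g_i(\alpha)\}_i$. *)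

From HB Require Import structures.
From mathcomp Require Import all_boot all_order all_algebra all_field.
Set Implicit Arguments. Unset Strict Implicit. Unset Printing Implicit Defensive.
Import GRing.Theory.
Local Open Scope ring_scope.

(* Base field B = F_q (any finite field), F a finite-dimensional extension of B
   (hence F = F_{q^t} with q = #|B|, t = \dim {:F}).  The evaluation set is A = F. *)

(* A linear repair scheme over B for the erased symbol f(astar) of RS(F,k):
   the scheme sends N sub-symbols in total; sub-symbol j is sent by node
   [node j] (which must differ from astar) and equals [mu j] applied to the
   symbol f(node j) stored there, where [mu j] is a B-linear functional F -> B.  Its bandwidth is N = sum_alpha b_alpha, where
   b_alpha = #{ j | node j = alpha }. *)
Definition is_linear_repair_scheme (B : fieldType) (F : fieldExtType B)
    (k : nat) (astar : F) (N : nat) (node : 'I_N -> F)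
    (mu : 'I_N -> {linear F -> B^o}) (Rec : {linear 'rV[B]_N -> F}) : Prop :=
  (forall j, node j != astar) /\
  (forall f : {poly F}, (size f <= k)%N ->
     Rec (\row_j (mu j (f.[node j]) : B)) = f.[astar]).

From HB Require Import structures.
From mathcomp Require Import all_boot all_order all_algebra all_field.
From mathcomp Require Import mxabelem zify.

(* A nonzero B-linear functional w on F, composed with the recovery map, is a
   combination of the received sub-symbols, and it must involve the
   sub-symbols of at least k nodes: otherwise a polynomial of degree < k
   vanishing at the nodes it involves, but not at the erased point, would be
   recovered as a value where w does not vanish.  Counting the pairs
   (w, alpha) with w ignoring node alpha thus gives
   sum_alpha |K_alpha| <= (n - 1)(n - k), while the functionals ignoring node
   alpha form a subspace K_alpha of size at least q^(t - b_alpha).  For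
   n - k = q^s, convexity of x |-> q^x turns
   sum_alpha q^(t - b_alpha) <= (n - 1) q^s into
   sum_alpha (t - b_alpha) <= (n - 1) s. *)

Set Implicit Arguments.
Unset Strict Implicit.
Unset Printing Implicit Defensive.

Local Open Scope ring_scope.
Import GRing.Theory passmx.

Lemma bernoulli_le_expn (q m : nat) : (0 < q)%N -> (1 + m * (q - 1) <= q ^ m)%N.
Proof.
move=> q_gt0; elim: m => [|m IHm]; first by rewrite expn0.
rewrite expnS; nia.
Qed.

Lemma secant_le_expn (q s x : nat) : (1 < q)%N ->
  (q ^ s + x * (q ^ s * (q - 1)) <= q ^ x + s * (q ^ s * (q - 1)))%N.
Proof.
move=> q_gt1; case: (leqP s x) => [/subnKC <- | lt_xs].
  have := @bernoulli_le_expn q (x - s) (ltnW q_gt1); rewrite expnD; nia.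
have : (x.+1 * (q ^ s * (q - 1)) <= s * (q ^ s * (q - 1)))%N.
  by rewrite leq_mul2r lt_xs orbT.
have : (q ^ s <= q ^ s * (q - 1))%N by rewrite leq_pmulr ?subn_gt0.
nia.
Qed.

Lemma sum_le_of_sum_expn_le (I : finType) (A : {pred I}) (q s : nat) (x : I -> nat) :
  (1 < q)%N -> (\sum_(i in A) q ^ x i <= #|A| * q ^ s)%N ->
  (\sum_(i in A) x i <= #|A| * s)%N.
Proof.
move=> q_gt1 sum_le; pose D := (q ^ s * (q - 1))%N.
have D_gt0 : (0 < D)%N by rewrite muln_gt0 expn_gt0 ltnW //= subn_gt0.
have chord : (\sum_(i in A) (q ^ s + x i * D) <= \sum_(i in A) (q ^ x i + s * D))%N.
  by apply: leq_sum => i _; apply: secant_le_expn.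
rewrite !big_split /= !sum_nat_const -big_distrl /= in chord.
rewrite -(leq_pmul2r D_gt0); nia.
Qed.

Lemma sum_card_le_incidence (I T : finType) (C : {set I}) (K : I -> {set T})
    (t0 : T) (c : nat) :
  (forall t, t != t0 -> (#|[set a in C | t \in K a]| <= c)%N) ->
  (\sum_(a in C) #|K a| <= #|C| + (#|T| - 1) * c)%N.
Proof.
move=> incid_le.
have -> : (\sum_(a in C) #|K a| = \sum_t #|[set a in C | t \in K a]|)%N.
  under eq_bigr do rewrite -sum1_card big_mkcond /=.
  rewrite exchange_big /=; apply: eq_bigr => t _.
  rewrite -sum1_card big_mkcond [RHS]big_mkcond; apply: eq_bigr => a _.
  by rewrite inE; case: (a \in C).
rewrite (bigD1 t0) //= leq_add //.
  by apply/subset_leq_card/subsetP => a; rewrite inE => /andP[].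
apply: (@leq_trans (\sum_(t | t != t0) c)); first exact: leq_sum.
by rewrite sum_nat_const cardC1 subn1.
Qed.

Section LinearRepairScheme.

Variables (B : finFieldType) (F : fieldExtType B) (k N : nat) (astar : F).
Variables (node : 'I_N -> F) (mu : 'I_N -> {linear F -> B^o}).
Variable Rec : {linear 'rV[B]_N -> F}.
Hypothesis repair : is_linear_repair_scheme k astar node mu Rec.

Local Notation q := #|B|.
Local Notation d := (\dim {:F}).
Local Notation coords := (rVof (vbasis {:F})).
Local Notation point := (vecof (vbasis {:F})).

Let coordsK : cancel coords point := rVofK (vbasisP {:F}).
Let pointK : cancel point coords := vecofK (vbasisP {:F}).

(* Both points of F and B-linear functionals on F are coordinate rows in a
   fixed B-basis of F. *)
Definition pairing (w : 'rV[B]_d) (x : F) : B := (w *m (coords x)^T) 0 0.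

Lemma pairing_eq0 w : (forall x, pairing w x = 0) -> w = 0.
Proof.
move=> w_x0; apply/rowP => i; have := w_x0 (point (delta_mx 0 i)).
by rewrite /pairing pointK trmx_delta -colE !mxE.
Qed.

Definition repair_coef (j : 'I_N) (w : 'rV[B]_d) : B := pairing w (Rec (delta_mx 0 j)).

Lemma pairing_Rec w c : pairing w (Rec c) = \sum_j c 0 j * repair_coef j w.
Proof.
rewrite /pairing {1}(row_sum_delta c) !linear_sum /= summxE.
by apply: eq_bigr => j _; rewrite !linearZ /= mxE.
Qed.

Definition repair_ker (a : F) : {set 'rV[B]_d} :=
  [set w | [forall j, (node j == a) ==> (repair_coef j w == 0)]].

Definition node_bandwidth (a : F) : nat := #|[set j | node j == a]|.

Lemma card_repair_ker a : (q ^ (d - node_bandwidth a) <= #|repair_ker a|)%N.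
Proof.
set P := [set j | node j == a].
pose M := \matrix_(i < d, l < #|P|) coords (Rec (delta_mx 0 (enum_val l))) 0 i.
suff -> : repair_ker a = rowg (kermx M).
  by rewrite card_rowg mxrank_ker leq_exp2l ?card_finNzRing_gt1 ?leq_sub2l ?rank_leq_col.
apply/setP => w; rewrite inE mem_rowg sub_kermx; apply/forallP/eqP => [coef0 | ].
  apply/rowP => l; have := coef0 (enum_val l); have := enum_valP l.
  rewrite inE => -> /eqP coef_eq0; rewrite !mxE -[RHS]coef_eq0.
  by rewrite /repair_coef /pairing !mxE; apply: eq_bigr => i _; rewrite !mxE.
move/rowP => wM0 j; apply/implyP => node_j; have Pj : j \in P by rewrite inE.
have := wM0 (enum_rank_in Pj j); rewrite !mxE => <-.
rewrite /repair_coef /pairing mxE; apply/eqP/eq_bigr => i _.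
by rewrite !mxE (enum_rankK_in Pj).
Qed.

Lemma pairing_eval_eq0 w (f : {poly F}) : (size f <= k)%N ->
    (forall j, w \notin repair_ker (node j) -> f.[node j] = 0) ->
  pairing w f.[astar] = 0.
Proof.
case: repair => _ recover size_f f_node0.
rewrite -(recover f size_f) pairing_Rec big1 // => j _; rewrite mxE.
have [|/f_node0 ->] := boolP (w \in repair_ker (node j)); last by rewrite linear0 mul0r.
by rewrite inE => /forallP/(_ j); rewrite eqxx => /eqP ->; rewrite mulr0.
Qed.

Definition live_nodes : {set 'rV[B]_d} := [set u | point u != astar].

Lemma card_live_nodes : #|live_nodes| = (q ^ d - 1)%N.
Proof.
have -> : live_nodes = [set~ coords astar].
  by apply/setP => u; rewrite !inE (can2_eq pointK coordsK).
by rewrite cardsC1 card_mx mul1n subn1.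
Qed.

Definition repair_support w := live_nodes :\: [set u | w \in repair_ker (point u)].

Lemma card_repair_support w : w != 0 -> (k <= #|repair_support w|)%N.
Proof.
move=> w_neq0; rewrite leqNgt; apply/negP => small_support.
pose P := \prod_(a <- [seq point u | u in repair_support w]) ('X - a%:P).
have size_P : size P = #|repair_support w|.+1 by rewrite size_prod_XsubC size_image.
have P_astar : P.[astar] != 0.
  rewrite -rootE root_prod_XsubC; apply/imageP => -[u].
  by rewrite !inE => /andP[_ /negP live_u] astar_u; apply: live_u; rewrite astar_u.
have P_node0 j : w \notin repair_ker (node j) -> P.[node j] = 0.
  move=> w_used; apply/rootP; rewrite root_prod_XsubC -[node j]coordsK image_f //.
  by rewrite !inE coordsK (repair.1 j) andbT; rewrite inE in w_used.
case/eqP: w_neq0; apply: pairing_eq0 => y.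
have := @pairing_eval_eq0 w ((y / P.[astar]) *: P); rewrite hornerZ divfK //; apply.
  by rewrite (leq_trans (size_scale_leq _ _)) ?size_P.
by move=> j /P_node0; rewrite hornerZ => ->; rewrite mulr0.
Qed.

Lemma repair_dim_lt : (k < q ^ d)%N.
Proof.
have coords1_neq0 : coords 1 != 0 by rewrite rVof_eq0 ?oner_neq0 ?vbasisP.
have := card_repair_support coords1_neq0.
have : (#|repair_support (coords 1)| <= #|live_nodes|)%N.
  exact: subset_leq_card (subsetDl _ _).
have : (0 < q ^ d)%N by rewrite expn_gt0 ltnW ?card_finNzRing_gt1.
rewrite card_live_nodes; lia.
Qed.

Lemma sum_node_bandwidth_le : (\sum_(u in live_nodes) node_bandwidth (point u) <= N)%N.
Proof.
apply: (@leq_trans (\sum_u node_bandwidth (point u))).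
  by rewrite [leqRHS](bigID (mem live_nodes)) leq_addr.
rewrite -[leqRHS]card_ord -sum1_card (partition_big (fun j => coords (node j)) predT) //=.
apply/eq_leq/eq_bigr => u _; rewrite /node_bandwidth -sum1dep_card; apply: eq_bigl => j.
by rewrite (can2_eq coordsK pointK).
Qed.

Lemma sum_expn_node_bandwidth_le :
  (\sum_(u in live_nodes) q ^ (d - node_bandwidth (point u))
     <= (q ^ d - 1) * (q ^ d - k))%N.
Proof.
apply: (@leq_trans (\sum_(u in live_nodes) #|repair_ker (point u)|)).
  by apply: leq_sum => u _; apply: card_repair_ker.
have silent_le w : w != 0 ->
    (#|[set u in live_nodes | w \in repair_ker (point u)]| <= #|live_nodes| - k)%N.
  move=> w_neq0; have := card_repair_support w_neq0.
  rewrite setIdE -(cardsID [set u | w \in repair_ker (point u)] live_nodes).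
  by rewrite -/(repair_support w) => k_le; rewrite -addnBA ?leq_addr.
apply: leq_trans (sum_card_le_incidence (K := fun u => repair_ker (point u)) silent_le) _.
rewrite card_mx mul1n card_live_nodes.
have -> : (q ^ d - k = (q ^ d - 1 - k).+1)%N by have := repair_dim_lt; lia.
by rewrite mulnSr addnC.
Qed.

Lemma repair_bandwidth_ge s : (q ^ d - k = q ^ s)%N -> ((q ^ d - 1) * (d - s) <= N)%N.
Proof.
move=> r_eq; have := sum_expn_node_bandwidth_le; rewrite r_eq -card_live_nodes.
move/(sum_le_of_sum_expn_le (card_finNzRing_gt1 B)) => sum_sub_bw_le.
have split_le : (#|live_nodes| * d
                   <= \sum_(u in live_nodes) (d - node_bandwidth (point u))
                      + \sum_(u in live_nodes) node_bandwidth (point u))%N.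
  rewrite -sum_nat_const -big_split /=; apply: leq_sum => u _.
  by rewrite addnC -leq_subLR.
rewrite mulnBr leq_subLR (leq_trans split_le) // leq_add //; exact: sum_node_bandwidth_le.
Qed.

End LinearRepairScheme.

Theorem corollary1 (B : finFieldType) (F : fieldExtType B) (s : nat)
    (hs1 : (1 <= s)%N) (hst : (s <= \dim {:F})%N)
    (astar : F) (N : nat) (node : 'I_N -> F)
    (mu : 'I_N -> {linear F -> B^o}) (Rec : {linear 'rV[B]_N -> F}) :
  let q := #|B| in
  let t := \dim {:F} in
  let n := (q ^ t)%N in
  let k := (n - q ^ s)%N in
  is_linear_repair_scheme k astar node mu Rec ->
  ((n - 1) * (t - s) <= N)%N.
Proof.
(* The bound holds for s = 0 as well. *)
move=> q t n k repair; apply: (repair_bandwidth_ge repair).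
by rewrite subKn // leq_exp2l // card_finNzRing_gt1.
Qed.
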